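(* Let $A$ be a unital $C^*$-algebra with a strongly continuous action $\sigma$ of $S^1$, let $\mathcal A\subseteq A$ be a norm-dense unital $*$-subalgebra, $B$ a unital $C^*$-algebra, $\beta_i:\mathcal A\to B$ a unital algebra homomorphism, $\beta_{-i}(a):=\beta_i(a^* )^*$, and $L_\beta:\mathcal A\to[0,\infty)$ a slip-norm. Suppose: (a) $P_0(\mathcal A)\subseteq\mathcal A$ and there exist $\zeta_1^R,\dots,\zeta_k^R,\zeta_1^L,\dots,\zeta_m^L\in\mathcal A\cap A_1$ with $\sum_j\zeta_j^R(\zeta_j^R)^*=1=\sum_j(\zeta_j^L)^*\zeta_j^L$; (b) $L_\beta(ab)\le L_\beta(a)\|\beta_i(b)\|+\|\beta_{-i}(a)\|L_\beta(b)$ for all $a,b\in\mathcal A$, and the restriction of $\beta_i$ to $\mathcal A\cap A_0$ extends to a unital $*$-homomorphism $A_0\to B$. Then for every $n\in\mathbb Z$ and every $y\in\mathcal A_n:=\mathcal A\cap A_n$ there is a constant $C_y\ge0$ such that $L_\beta(y^*x)\le C_y\cdot(L_\beta(x)+\|x\|)$ for all $x\in\mathcal A_n$.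
   Context: $A_n:=\{a\in A:\sigma_\lambda(a)=\lambda^na\ \forall\lambda\in S^1\}$, $P_0(a):=\frac1{2\pi}\int_0^{2\pi}\sigma_{e^{it}}(a)dt$. A slip-norm is a seminorm $L$ with $L(1)=0$ and $L(a^* )=L(a)$. *)

From HB Require Import structures.
From mathcomp Require Import all_boot all_order all_algebra.
From mathcomp Require Import all_classical all_reals all_analysis.
From mathcomp Require Import complex.

Set Implicit Arguments.
Unset Strict Implicit.
Unset Printing Implicit Defensive.

Import Order.TTheory GRing.Theory Num.Theory.
Import numFieldNormedType.Exports.
Local Open Scope ring_scope.
Local Open Scope classical_set_scope.

(* The carrier is a real Banach space
   (completeNormedModType R, real-valued norm); the complex structure is
   given by the operator cs_J (multiplication by i), so that complex scaling
   is (a + i b).x := a x + b (J x). *)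

Record CstarAlgebra (R : realType) := {
  cs_car :> completeNormedModType R;
  cs_J : cs_car -> cs_car;
  cs_mul : cs_car -> cs_car -> cs_car;
  cs_one : cs_car;
  cs_star : cs_car -> cs_car;
  cs_J_add : forall x y, cs_J (x + y) = cs_J x + cs_J y;
  cs_J_scale : forall (r : R) x, cs_J (r *: x) = r *: cs_J x;
  cs_JJ : forall x, cs_J (cs_J x) = - x;
  cs_norm_cscale : forall (a b : R) x,
      `|a *: x + b *: cs_J x| = Num.sqrt (a ^+ 2 + b ^+ 2) * `|x|;
  cs_mulDl : forall x y z, cs_mul (x + y) z = cs_mul x z + cs_mul y z;
  cs_mulDr : forall x y z, cs_mul x (y + z) = cs_mul x y + cs_mul x z;
  cs_mulZl : forall (r : R) x y, cs_mul (r *: x) y = r *: cs_mul x y;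
  cs_mulZr : forall (r : R) x y, cs_mul x (r *: y) = r *: cs_mul x y;
  cs_mulJl : forall x y, cs_mul (cs_J x) y = cs_J (cs_mul x y);
  cs_mulJr : forall x y, cs_mul x (cs_J y) = cs_J (cs_mul x y);
  cs_mulA : forall x y z, cs_mul x (cs_mul y z) = cs_mul (cs_mul x y) z;
  cs_mul1l : forall x, cs_mul cs_one x = x;
  cs_mul1r : forall x, cs_mul x cs_one = x;
  cs_norm_mul : forall x y, `|cs_mul x y| <= `|x| * `|y|;
  cs_starD : forall x y, cs_star (x + y) = cs_star x + cs_star y;
  cs_starZ : forall (r : R) x, cs_star (r *: x) = r *: cs_star x;
  cs_starJ : forall x, cs_star (cs_J x) = - cs_J (cs_star x);
  cs_starK : forall x, cs_star (cs_star x) = x;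
  cs_starM : forall x y, cs_star (cs_mul x y) = cs_mul (cs_star y) (cs_star x);
  cs_Cstar : forall x, `|cs_mul (cs_star x) x| = `|x| ^+ 2
}.

Arguments cs_J {R A} : rename.
Arguments cs_mul {R A} : rename.
Arguments cs_one {R} A : rename.
Arguments cs_star {R A} : rename.

Definition cscale (R : realType) (A : CstarAlgebra R) (c : R[i]) (x : A) : A :=
  let: Complex a b := c in a *: (x : cs_car A) + b *: (cs_J x : cs_car A).

Definition cabs (R : realType) (c : R[i]) : R := ComplexField.Normc.normc c.

Definition S1 (R : realType) : set R[i] := [set l | cabs l = 1].

Definition expi (R : realType) (t : R) : R[i] := Complex (cos t) (sin t).

Definition is_unital_star_hom_on (R : realType) (A B : CstarAlgebra R)
    (D : set A) (f : A -> B) : Prop :=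
  [/\ forall x y, D x -> D y -> f (x + y) = f x + f y,
      forall c x, D x -> f (cscale c x) = cscale c (f x),
      forall x y, D x -> D y -> f (cs_mul x y) = cs_mul (f x) (f y),
      forall x, D x -> f (cs_star x) = cs_star (f x)
    & f (cs_one A) = cs_one B].

Definition strongly_continuous_circle_action (R : realType) (A : CstarAlgebra R)
    (sigma : R[i] -> A -> A) : Prop :=
  [/\ forall l, S1 l -> is_unital_star_hom_on setT (sigma l),
      forall x, sigma 1 x = x,
      forall l m x, S1 l -> S1 m -> sigma (l * m) x = sigma l (sigma m x)
    & forall x, continuous (fun t : R => sigma (expi t) x)].

Definition spectral_subspace (R : realType) (A : CstarAlgebra R)
    (sigma : R[i] -> A -> A) (n : int) : set A :=
  [set a | forall l, S1 l -> sigma l a = cscale (l ^ n) a].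

(* P_0(a) = (1/2pi) \int_0^{2pi} sigma_{e^{it}}(a) dt, written as the limit of
   the (left, uniform) Riemann sums of the continuous integrand. *)
Definition P0 (R : realType) (A : CstarAlgebra R) (sigma : R[i] -> A -> A)
    (a : A) : A :=
  lim ((fun N : nat =>
          (N.+1%:R : R)^-1 *:
            \sum_(k < N.+1) sigma (expi (2 * pi * k%:R / N.+1%:R)) a) @ \oo).

Definition is_unital_star_subalgebra (R : realType) (A : CstarAlgebra R)
    (S : set A) : Prop :=
  [/\ S (cs_one A),
      forall x y, S x -> S y -> S (x + y),
      forall c x, S x -> S (cscale c x),
      forall x y, S x -> S y -> S (cs_mul x y)
    & forall x, S x -> S (cs_star x)].

Definition is_unital_alg_hom_on (R : realType) (A B : CstarAlgebra R)
    (D : set A) (f : A -> B) : Prop :=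
  [/\ forall x y, D x -> D y -> f (x + y) = f x + f y,
      forall c x, D x -> f (cscale c x) = cscale c (f x),
      forall x y, D x -> D y -> f (cs_mul x y) = cs_mul (f x) (f y)
    & f (cs_one A) = cs_one B].

Definition is_slip_norm_on (R : realType) (A : CstarAlgebra R)
    (D : set A) (L : A -> R) : Prop :=
  [/\ forall x, D x -> 0 <= L x,
      forall x y, D x -> D y -> L (x + y) <= L x + L y,
      forall c x, D x -> L (cscale c x) = cabs c * L x,
      L (cs_one A) = 0
    & forall x, D x -> L (cs_star x) = L x].

Definition beta_minus (R : realType) (A B : CstarAlgebra R) (beta : A -> B)
    (a : A) : B := cs_star (beta (cs_star a)).

From HB Require Import structures.
From mathcomp Require Import all_boot all_order all_algebra.
From mathcomp Require Import all_classical all_reals all_analysis.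
From mathcomp Require Import complex ring lra.

Set Implicit Arguments.
Unset Strict Implicit.
Unset Printing Implicit Defensive.

Import Order.TTheory GRing.Theory Num.Theory.
Import numFieldNormedType.Exports.
Local Open Scope ring_scope.
Local Open Scope classical_set_scope.

(* By the Leibniz rule (b) and L(y^* ) = L(y),
     L(y^* x) <= L(y) |beta x| + |beta_{-i}(y^* )| L(x),
   so it suffices that beta is bounded on cA /\ A_n.  On cA /\ A_0 it agrees with a unital
   *-homomorphism of A_0, and *-homomorphisms are bounded without any spectral theory: for
   self-adjoint k with |k| <= 1/2, both 1 - k and 1 + k are squares of commuting self-adjoint
   elements of A_0 (fixed points of a contraction, which A_0 inherits because every sigma_l is
   continuous), and the C*-identity in the target bounds the image of k.  Bounds pass from A_p
   to A_(p+1) through x = sum_j zR_j (zR_j^* x), and from A_(-p) to A_(-p-1) through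
   x = sum_j zL_j^* (zL_j x). *)

Lemma additive_bounded_continuous (R : realType) (V W : normedModType R)
    (h : V -> W) (G : R) :
  (forall x y, h (x - y) = h x - h y) -> (forall x, `|h x| <= G * `|x|) ->
  continuous h.
Proof.
move=> hB hG x; apply/cvgrPdist_lt => e e0.
have G1 : 0 < `|G| + 1 by rewrite ltr_pwDr ?normr_ge0.
have e_G1 : 0 < (`|G| + 1)^-1 * e by rewrite mulr_gt0 ?invr_gt0.
have le_G1 : G <= `|G| + 1 by rewrite (le_trans (ler_norm G)) ?lerDl.
near=> y; rewrite -hB; apply: le_lt_trans (hG _) _.
apply: le_lt_trans (ler_wpM2r (normr_ge0 _) le_G1) _.
rewrite -ltr_pdivlMl; last exact: G1.
near: y; exact: (@cvgr_dist_lt _ _ _ _ _ id x cvg_id _ e_G1).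
Unshelve. all: by end_near. Qed.

Section CstarAlgebraTheory.
Variables (R : realType) (A : CstarAlgebra R).
Implicit Types (x y z : A) (c d : R[i]).

Lemma cs_mul0l x : cs_mul 0 x = 0.
Proof. by have := cs_mulZl 0 0 x; rewrite !scale0r. Qed.

Lemma cs_mul0r x : cs_mul x 0 = 0.
Proof. by have := cs_mulZr 0 x 0; rewrite !scale0r. Qed.

Lemma cs_mulNl x y : cs_mul (- x) y = - cs_mul x y.
Proof. by rewrite -scaleN1r cs_mulZl scaleN1r. Qed.

Lemma cs_mulNr x y : cs_mul x (- y) = - cs_mul x y.
Proof. by rewrite -scaleN1r cs_mulZr scaleN1r. Qed.

Lemma cs_mulBl x y z : cs_mul (x - y) z = cs_mul x z - cs_mul y z.
Proof. by rewrite cs_mulDl cs_mulNl. Qed.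

Lemma cs_mulBr x y z : cs_mul x (y - z) = cs_mul x y - cs_mul x z.
Proof. by rewrite cs_mulDr cs_mulNr. Qed.

Lemma cs_mul_suml (I : Type) (r : seq I) (P : pred I) (F : I -> A) x :
  cs_mul (\sum_(i <- r | P i) F i) x = \sum_(i <- r | P i) cs_mul (F i) x.
Proof. exact: (big_morph (cs_mul^~ x) (fun a b => cs_mulDl a b x) (cs_mul0l x)). Qed.

Lemma cs_norm_sub_sqr x y :
  `|cs_mul x x - cs_mul y y| <= (`|x| + `|y|) * `|x - y|.
Proof.
have -> : cs_mul x x - cs_mul y y = cs_mul x (x - y) + cs_mul (x - y) y.
  by rewrite cs_mulBr cs_mulBl addrA subrK.
rewrite mulrDl (le_trans (ler_normD _ _)) // lerD //.
  by rewrite (le_trans (cs_norm_mul _ _)).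
by rewrite mulrC (le_trans (cs_norm_mul _ _)).
Qed.

Lemma cs_starN x : cs_star (- x) = - cs_star x.
Proof. by rewrite -scaleN1r cs_starZ scaleN1r. Qed.

Lemma cs_starB x y : cs_star (x - y) = cs_star x - cs_star y.
Proof. by rewrite cs_starD cs_starN. Qed.

Lemma cs_star1 : cs_star (cs_one A) = cs_one A.
Proof.
by rewrite -[cs_star _]cs_mul1r -[X in cs_mul _ X]cs_starK -cs_starM cs_mul1r cs_starK.
Qed.

Lemma cs_norm_star_le x : `|x| <= `|cs_star x|.
Proof.
have [->|x0] := eqVneq x 0; first by rewrite normr0.
have : `|x| ^+ 2 <= `|cs_star x| * `|x| by rewrite -cs_Cstar cs_norm_mul.
by rewrite expr2 ler_pM2r ?normr_gt0.
Qed.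

Lemma cs_norm_star x : `|cs_star x| = `|x|.
Proof.
apply/le_anti; rewrite cs_norm_star_le andbT.
by rewrite -[X in _ <= `|X|]cs_starK cs_norm_star_le.
Qed.

Lemma cs_star_continuous : continuous (@cs_star R A).
Proof.
apply: (@additive_bounded_continuous _ _ _ _ 1) => [x y|x]; first exact: cs_starB.
by rewrite mul1r cs_norm_star.
Qed.

Lemma cs_norm1 : `|cs_one A| <= 1.
Proof.
have := cs_Cstar (cs_one A); rewrite cs_star1 cs_mul1l expr2.
have [->|n0] := eqVneq `|cs_one A| 0; first by [].
by rewrite -{1}[`|cs_one A|]mulr1 => /(mulfI n0) <-.
Qed.

Lemma cscale_real (r : R) x : cscale (Complex r 0) x = r *: x.
Proof. by rewrite /cscale scale0r addr0. Qed.

Lemma cscale1 x : cscale 1 x = x.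
Proof. by rewrite /cscale /= scale1r scale0r addr0. Qed.

Lemma cs_mul_cscalel c x y : cs_mul (cscale c x) y = cscale c (cs_mul x y).
Proof. by case: c => a b; rewrite /cscale cs_mulDl !cs_mulZl cs_mulJl. Qed.

Lemma cs_mul_cscaler c x y : cs_mul x (cscale c y) = cscale c (cs_mul x y).
Proof. by case: c => a b; rewrite /cscale cs_mulDr !cs_mulZr cs_mulJr. Qed.

Lemma cscaleA c d x : cscale c (cscale d x) = cscale (c * d) x.
Proof.
case: c => a b; case: d => p q; rewrite /cscale /=.
rewrite !cs_J_add !cs_J_scale cs_JJ !scalerDr !scalerA.
rewrite scalerBl scalerDl scalerN -!addrA; congr (_ + _).
by rewrite [LHS]addrA [LHS]addrC.
Qed.

Lemma cs_star_cscale c x : cs_star (cscale c x) = cscale (conjc c) (cs_star x).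
Proof.
by case: c => a b; rewrite /cscale /= cs_starD !cs_starZ cs_starJ scalerN scaleNr.
Qed.

(* With z := x + i y one has z^* z = x^2 + y^2 and 2 x = z + z^*. *)
Lemma cs_norm_sqr_le_sum_sqr x y : cs_star x = x -> cs_star y = y ->
  cs_mul x y = cs_mul y x -> `|x| ^+ 2 <= `|cs_mul x x + cs_mul y y|.
Proof.
move=> sx sy xy; pose z := x + cs_J y.
have sz : cs_star z = x - cs_J y by rewrite cs_starD cs_starJ sx sy.
have zz : cs_mul (cs_star z) z = cs_mul x x + cs_mul y y.
  rewrite sz cs_mulDr !cs_mulBl !cs_mulJl !cs_mulJr cs_JJ xy.
  by rewrite opprK addrA subrK.
have x_le_z : `|x| <= `|z|.
  have zsz : z + cs_star z = x *+ 2 by rewrite sz addrACA subrr addr0 mulr2n.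
  by have := ler_normD z (cs_star z); rewrite zsz cs_norm_star normrMn -mulr2n lerMn2r.
by rewrite -zz cs_Cstar lerXn2r ?nnegrE.
Qed.

End CstarAlgebraTheory.

Section UnitalStarSubalgebra.
Variables (R : realType) (A : CstarAlgebra R) (D : set A).
Hypothesis hD : is_unital_star_subalgebra D.

Lemma subalg1 : D (cs_one A). Proof. by case: hD. Qed.
Lemma subalgD x y : D x -> D y -> D (x + y). Proof. by case: hD => _ + _ _ _; apply. Qed.
Lemma subalgZ c x : D x -> D (cscale c x). Proof. by case: hD => _ _ + _ _; apply. Qed.
Lemma subalgM x y : D x -> D y -> D (cs_mul x y). Proof. by case: hD => _ _ _ + _; apply. Qed.
Lemma subalgS x : D x -> D (cs_star x). Proof. by case: hD => _ _ _ _; apply. Qed.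

Lemma subalgZr (r : R) x : D x -> D (r *: x).
Proof. by rewrite -cscale_real; apply: subalgZ. Qed.

Lemma subalgN x : D x -> D (- x).
Proof. by rewrite -scaleN1r; apply: subalgZr. Qed.

Lemma subalgB x y : D x -> D y -> D (x - y).
Proof. by move=> Dx Dy; apply: subalgD Dx (subalgN Dy). Qed.

Lemma subalg0 : D 0.
Proof. by rewrite -(subrr (cs_one A)); apply: subalgB subalg1 subalg1. Qed.

End UnitalStarSubalgebra.

Lemma subalgT (R : realType) (A : CstarAlgebra R) : is_unital_star_subalgebra [set: A].
Proof. by []. Qed.

Definition bounded_on (R : realType) (V W : normedModType R)
    (S : set V) (f : V -> W) :=
  exists2 C : R, 0 <= C & forall x, S x -> `|f x| <= C * `|x|.

Section UnitalAlgHom.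
Variables (R : realType) (A B : CstarAlgebra R) (D : set A) (f : A -> B).
Hypotheses (hD : is_unital_star_subalgebra D) (hf : is_unital_alg_hom_on D f).

Lemma alg_homD x y : D x -> D y -> f (x + y) = f x + f y.
Proof. by case: hf => + _ _ _; apply. Qed.
Lemma alg_homM x y : D x -> D y -> f (cs_mul x y) = cs_mul (f x) (f y).
Proof. by case: hf => _ _ + _; apply. Qed.
Lemma alg_hom1 : f (cs_one A) = cs_one B.
Proof. by case: hf. Qed.

Lemma alg_homZ c x : D x -> f (cscale c x) = cscale c (f x).
Proof. by case: hf => _ + _ _; apply. Qed.

Lemma alg_homZr (r : R) x : D x -> f (r *: x) = r *: f x.
Proof. by rewrite -!cscale_real; apply: alg_homZ. Qed.

Lemma alg_homN x : D x -> f (- x) = - f x.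
Proof. by move=> Dx; rewrite -scaleN1r alg_homZr// scaleN1r. Qed.

Lemma alg_homB x y : D x -> D y -> f (x - y) = f x - f y.
Proof. by move=> Dx Dy; rewrite alg_homD ?alg_homN //; apply: subalgN. Qed.

Lemma alg_hom0 : f 0 = 0.
Proof. by have D1 := subalg1 hD; rewrite -(subrr (cs_one A)) alg_homB// subrr. Qed.

Lemma alg_hom_sum (k : nat) (F : 'I_k -> A) : (forall j, D (F j)) ->
  f (\sum_(j < k) F j) = \sum_(j < k) f (F j).
Proof.
elim: k F => [|k IH] F DF; first by rewrite !big_ord0 alg_hom0.
rewrite !big_ord_recr /= alg_homD ?IH//.
by apply: (big_ind D (subalg0 hD) (subalgD hD)).
Qed.

Lemma alg_hom_bounded_frame (k : nat) (a b : 'I_k -> A) (S T : set A) :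
    (forall j, D (a j) /\ D (b j)) -> \sum_(j < k) cs_mul (a j) (b j) = cs_one A ->
    (forall j x, T x -> S (cs_mul (b j) x)) ->
  bounded_on (D `&` S) f -> bounded_on (D `&` T) f.
Proof.
move=> Dab sum1 bTS [C C0 hC].
exists (C * \sum_(j < k) `|f (a j)| * `|b j|).
  by rewrite mulr_ge0 // sumr_ge0 // => j _; rewrite mulr_ge0.
move=> x [Dx Tx].
have Dbx j : D (cs_mul (b j) x) := subalgM hD (Dab j).2 Dx.
have x_sum : x = \sum_(j < k) cs_mul (a j) (cs_mul (b j) x).
  by rewrite -[LHS]cs_mul1l -sum1 cs_mul_suml; apply: eq_bigr => j _; rewrite cs_mulA.
rewrite {1}x_sum alg_hom_sum => [|j]; last exact: subalgM (Dab j).1 (Dbx j).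
rewrite (le_trans (ler_norm_sum _ _ _)) // mulr_sumr mulr_suml; apply: ler_sum => j _.
rewrite alg_homM; [|exact: (Dab j).1|exact: Dbx].
apply: le_trans (cs_norm_mul _ _) _.
apply: le_trans (ler_wpM2l (normr_ge0 _) (hC _ (conj (Dbx j) (bTS j x Tx)))) _.
by rewrite mulrCA -!mulrA; do 2!apply: ler_wpM2l => //; exact: cs_norm_mul.
Qed.

End UnitalAlgHom.
Lemma star_hom_alg_hom (R : realType) (A B : CstarAlgebra R) (D : set A) (f : A -> B) :
  is_unital_star_hom_on D f -> is_unital_alg_hom_on D f.
Proof. by case. Qed.

Lemma star_homS (R : realType) (A B : CstarAlgebra R) (D : set A) (f : A -> B) x :
  is_unital_star_hom_on D f -> D x -> f (cs_star x) = cs_star (f x).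
Proof. by case=> _ _ _ + _; apply. Qed.

Section SqrtOneSub.
Variables (R : realType) (A : CstarAlgebra R) (k : A).

(* (1 - y)^2 = 1 - k exactly when y = (k + y^2) / 2, and on the closed ball of radius 1/2
   this map is a 1/2-contraction. *)
Definition sqrt_step (y : A) : A := 2^-1 *: (k + cs_mul y y).
Definition sqrt_iter (n : nat) : A := iter n sqrt_step 0.
Definition sqrt1B : A := cs_one A - limn sqrt_iter.

Hypothesis k_small : `|k| <= 2^-1.

Let U := closed_ball (0 : A) 2^-1.

Let inU y : U y = (`|y| <= 2^-1).
Proof. by rewrite /U closed_ballE ?invr_gt0// /closed_ball_ /= sub0r normrN. Qed.

Lemma sqrt_step_ball : {homo sqrt_step : y / U y >-> U y}.
Proof.
move=> y; rewrite !inU => y_small; rewrite normrZ ger0_norm ?invr_ge0 ?ler0n//.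
have : `|k + cs_mul y y| <= 2^-1 + 2^-1 * 2^-1.
  by rewrite (le_trans (ler_normD _ _)) ?lerD ?(le_trans (cs_norm_mul _ _)) ?ler_pM.
lra.
Qed.

Let stepU : {fun U >-> U} :=
  HB.pack sqrt_step (isFun.Build _ _ U U sqrt_step sqrt_step_ball).

Lemma sqrt_step_contraction : contraction (2^-1)%:nng stepU.
Proof.
split=> [|[y z] [/= Uy Uz]]; first by rewrite /= invf_lt1 ?ltr1n.
rewrite inU in Uy; rewrite inU in Uz; rewrite /= /sqrt_step -scalerBr opprD addrACA subrr.
rewrite add0r normrZ ger0_norm ?invr_ge0 ?ler0n//.
apply: ler_wpM2l; first by rewrite invr_ge0 ler0n.
apply: (le_trans (cs_norm_sub_sqr _ _)).
by rewrite ler_piMl ?normr_ge0//; lra.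
Qed.

Lemma sqrt_iter_cvg : cvgn sqrt_iter.
Proof. by apply: (contraction_cvg sqrt_step_contraction); rewrite inU normr0 invr_ge0. Qed.

Lemma sqrt_lim_fixed : limn sqrt_iter = sqrt_step (limn sqrt_iter).
Proof.
apply: (contraction_cvg_fixed sqrt_step_contraction); last exact: closed_ball_closed.
by rewrite inU normr0 invr_ge0.
Qed.

Lemma sqrt1B_sqr : cs_mul sqrt1B sqrt1B = cs_one A - k.
Proof.
have y2 : limn sqrt_iter + limn sqrt_iter =
          k + cs_mul (limn sqrt_iter) (limn sqrt_iter).
  have half2 : (2^-1 + 2^-1 : R) = 1 by lra.
  by rewrite {1 2}sqrt_lim_fixed -scalerDl half2 scale1r.
rewrite /sqrt1B cs_mulBl !cs_mulBr !cs_mul1l cs_mul1r -addrA -opprD.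
by rewrite addrA y2 addrK.
Qed.

Lemma sqrt_lim_eq (h h' : A -> A) : continuous h -> continuous h' ->
  (forall n, h (sqrt_iter n) = h' (sqrt_iter n)) ->
  h (limn sqrt_iter) = h' (limn sqrt_iter).
Proof.
move=> ch ch' hh'.
apply: (cvg_unique _ (continuous_cvg _ (ch _) sqrt_iter_cvg)); first exact: norm_hausdorff.
rewrite (_ : h \o sqrt_iter = h' \o sqrt_iter); last exact/funext.
exact: (continuous_cvg _ (ch' _) sqrt_iter_cvg).
Qed.

Lemma sqrt1B_comm c : cs_mul k c = cs_mul c k -> cs_mul sqrt1B c = cs_mul c sqrt1B.
Proof.
move=> kc.
have iter_comm n : cs_mul (sqrt_iter n) c = cs_mul c (sqrt_iter n).
  elim: n => [|n IH]; first by rewrite cs_mul0l cs_mul0r.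
  rewrite /sqrt_iter iterS -/(sqrt_iter n) /sqrt_step cs_mulZl cs_mulZr.
  by rewrite cs_mulDl cs_mulDr kc -cs_mulA IH !cs_mulA IH.
have lim_comm : cs_mul (limn sqrt_iter) c = cs_mul c (limn sqrt_iter).
  apply: (sqrt_lim_eq (h := cs_mul^~ c) (h' := cs_mul c)) iter_comm.
    apply: (@additive_bounded_continuous _ _ _ _ `|c|) => [x y|x].
      exact: cs_mulBl.
    by rewrite mulrC cs_norm_mul.
  apply: (@additive_bounded_continuous _ _ _ _ `|c|) => [x y|x].
    exact: cs_mulBr.
  exact: cs_norm_mul.
by rewrite /sqrt1B cs_mulBl cs_mulBr cs_mul1l cs_mul1r lim_comm.
Qed.

Lemma sqrt1B_fixed (g : A -> A) : continuous g ->
  (forall x y, g (x + y) = g x + g y) -> (forall (r : R) x, g (r *: x) = r *: g x) ->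
  (forall y, g (cs_mul y y) = cs_mul (g y) (g y)) ->
  g k = k -> g (cs_one A) = cs_one A -> g sqrt1B = sqrt1B.
Proof.
move=> cg gD gZ gsq gk g1.
have gN x : g (- x) = - g x by rewrite -scaleN1r gZ scaleN1r.
have g_iter n : g (sqrt_iter n) = sqrt_iter n.
  elim: n => [|n IH]; first by rewrite /sqrt_iter /= -(scale0r (0 : A)) gZ !scale0r.
  by rewrite /sqrt_iter iterS -/(sqrt_iter n) /sqrt_step gZ gD gsq IH gk.
by rewrite /sqrt1B gD gN g1 (sqrt_lim_eq (h' := id) cg (fun _ => cvg_id) g_iter).
Qed.

Lemma sqrt1B_star : cs_star k = k -> cs_star sqrt1B = sqrt1B.
Proof.
move=> sk; apply: sqrt1B_fixed => //.
- exact: cs_star_continuous.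
- exact: cs_starD.
- exact: cs_starZ.
- by move=> y; rewrite cs_starM.
- exact: cs_star1.
Qed.

End SqrtOneSub.

Section StarHomBound.
Variables (R : realType) (A B : CstarAlgebra R) (D : set A) (f : A -> B).
Hypotheses (hD : is_unital_star_subalgebra D) (hf : is_unital_star_hom_on D f).
Hypothesis D_sqrt1B : forall k, `|k| <= 2^-1 -> cs_star k = k -> D k -> D (sqrt1B k).

Let hf_alg := star_hom_alg_hom hf.
Let D1 := subalg1 hD.

(* With v1 := f (sqrt1B k) and v2 := f (sqrt1B (- k)) we get v1^2 + v2^2 = 2 and
   2 f k = v2^2 - v1^2, while each |vi|^2 is at most |v1^2 + v2^2|. *)
Lemma star_hom_selfadjoint_le2 k : D k -> cs_star k = k -> `|k| <= 2^-1 -> `|f k| <= 2.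
Proof.
move=> Dk sk k_small; have Dk' := subalgN hD Dk.
have sk' : cs_star (- k) = - k by rewrite cs_starN sk.
have k'_small : `|- k| <= 2^-1 by rewrite normrN.
have Ds1 := D_sqrt1B k_small sk Dk; have Ds2 := D_sqrt1B k'_small sk' Dk'.
have s2k : cs_mul (sqrt1B (- k)) k = cs_mul k (sqrt1B (- k)).
  by apply: sqrt1B_comm; rewrite // cs_mulNl cs_mulNr.
have s12 : cs_mul (f (sqrt1B k)) (f (sqrt1B (- k))) =
           cs_mul (f (sqrt1B (- k))) (f (sqrt1B k)).
  by rewrite -!(alg_homM hf_alg) // sqrt1B_comm.
have sf1 : cs_star (f (sqrt1B k)) = f (sqrt1B k).
  by rewrite -(star_homS hf) // sqrt1B_star.
have sf2 : cs_star (f (sqrt1B (- k))) = f (sqrt1B (- k)).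
  by rewrite -(star_homS hf) // sqrt1B_star.
set v1 := f (sqrt1B k) in s12 sf1 sf2 *; set v2 := f (sqrt1B (- k)) in s12 sf1 sf2 *.
have D1k := subalgB hD D1 Dk; have D1k' := subalgB hD D1 Dk'.
have sum_sqr : cs_mul v1 v1 + cs_mul v2 v2 = cs_one B + cs_one B.
  rewrite -!(alg_homM hf_alg) // !sqrt1B_sqr // -(alg_homD hf_alg) //.
  by rewrite opprK addrACA addNr addr0 (alg_homD hf_alg) // (alg_hom1 hf_alg).
have diff_sqr : f k *+ 2 = cs_mul v2 v2 - cs_mul v1 v1.
  rewrite mulr2n -(alg_homD hf_alg) // -!(alg_homM hf_alg) // !sqrt1B_sqr //.
  rewrite -(alg_homB hD hf_alg) //; congr f.
  by rewrite opprK opprB [RHS]addrC addrA subrK.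
have n1 := cs_norm_sqr_le_sum_sqr sf1 sf2 s12.
have n2 := cs_norm_sqr_le_sum_sqr sf2 sf1 (esym s12); rewrite addrC in n2.
have n11 : `|cs_one B + cs_one B| <= 2.
  by rewrite (le_trans (ler_normD _ _)) // -[2]/(1 + 1 : R) lerD ?cs_norm1.
have : `|f k| *+ 2 <= `|v2| ^+ 2 + `|v1| ^+ 2.
  rewrite -normrMn diff_sqr (le_trans (ler_normB _ _)) // lerD // expr2 cs_norm_mul //.
rewrite sum_sqr in n1 n2; rewrite mulr2n; lra.
Qed.

Lemma star_hom_bounded w : D w -> `|f w| <= 2 * `|w|.
Proof.
move=> Dw; have [->|w0] := eqVneq w 0.
  by rewrite (alg_hom0 hD hf_alg) !normr0 mulr0.
have t0 : 0 < `|w| by rewrite normr_gt0.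
have c0 : 0 < (2 * `|w| ^+ 2)^-1 by rewrite invr_gt0 mulr_gt0 ?exprn_gt0.
pose k := (2 * `|w| ^+ 2)^-1 *: cs_mul (cs_star w) w.
have Dsw := subalgS hD Dw; have Dww := subalgM hD Dsw Dw.
have Dk : D k by apply: subalgZr.
have sk : cs_star k = k by rewrite cs_starZ cs_starM cs_starK.
have k_small : `|k| <= 2^-1.
  by rewrite normrZ gtr0_norm // cs_Cstar invfM -mulrA mulVf ?mulr1 // gt_eqF ?exprn_gt0.
have := star_hom_selfadjoint_le2 Dk sk k_small.
rewrite (alg_homZr hf_alg) // (alg_homM hf_alg) // (star_homS hf) //.
rewrite normrZ gtr0_norm // cs_Cstar -ler_pdivlMl //.
have := normr_ge0 (f w); nra.
Qed.

End StarHomBound.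

Lemma S1_conjcM (R : realType) (l : R[i]) : S1 l -> conjc l * l = 1.
Proof.
case: l => a b; rewrite /S1 /cabs /= => h.
have h2 : a ^+ 2 + b ^+ 2 = 1.
  by rewrite -[LHS]sqr_sqrtr ?addr_ge0 ?sqr_ge0 // h expr1n.
by apply/eqP; rewrite eq_complex /= !mulNr opprK -!expr2 h2 mulrC subrr !eqxx.
Qed.

Lemma S1_neq0 (R : realType) (l : R[i]) : S1 l -> l != 0.
Proof. by move/S1_conjcM; apply: contra_eq_neq => ->; rewrite mulr0 eq_sym oner_neq0. Qed.

Lemma S1_conjc (R : realType) (l : R[i]) : S1 l -> conjc l = l^-1.
Proof.
by move=> hl; rewrite -[conjc l]mulr1 -(mulfV (S1_neq0 hl)) mulrA S1_conjcM // mul1r.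
Qed.

Section CircleAction.
Variables (R : realType) (A : CstarAlgebra R) (sigma : R[i] -> A -> A).
Hypothesis hs : strongly_continuous_circle_action sigma.
Local Notation spec := (spectral_subspace sigma).

Lemma circle_star_hom l : S1 l -> is_unital_star_hom_on [set: A] (sigma l).
Proof. by case: hs => + _ _ _; apply. Qed.

Let sigma_alg l (hl : S1 l) := star_hom_alg_hom (circle_star_hom hl).

Lemma circle_action_continuous l : S1 l -> continuous (sigma l).
Proof.
move=> hl; apply: (@additive_bounded_continuous _ _ _ _ 2) => [x y|x].
  exact: (alg_homB (subalgT A) (sigma_alg hl)).
exact: (star_hom_bounded (subalgT A) (circle_star_hom hl)).
Qed.

Lemma spectral0P x : spec 0 x <-> forall l, S1 l -> sigma l x = x.
Proof. by split=> h l hl; rewrite h // expr0z cscale1. Qed.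

Lemma spectral0_subalg : is_unital_star_subalgebra (spec 0).
Proof.
split=> [|x y|c x|x y|x]; rewrite ?spectral0P.
- by move=> l hl; rewrite (alg_hom1 (sigma_alg hl)).
- by move=> hx hy l hl; rewrite (alg_homD (sigma_alg hl)) ?hx ?hy.
- by move=> hx l hl; rewrite (alg_homZ (sigma_alg hl)) ?hx.
- by move=> hx hy l hl; rewrite (alg_homM (sigma_alg hl)) ?hx ?hy.
- by move=> hx l hl; rewrite (star_homS (circle_star_hom hl)) ?hx.
Qed.

Lemma spectral0_sqrt1B k :
  `|k| <= 2^-1 -> cs_star k = k -> spec 0 k -> spec 0 (sqrt1B k).
Proof.
move=> k_small sk /spectral0P k0; apply/spectral0P => l hl.
have hsl := sigma_alg hl.
apply: sqrt1B_fixed => //.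
- exact: circle_action_continuous.
- by move=> x y; rewrite (alg_homD hsl).
- by move=> r x; rewrite (alg_homZr hsl).
- by move=> y; rewrite (alg_homM hsl).
- exact: k0.
- exact: (alg_hom1 hsl).
Qed.

Lemma spectral_mul m n z x : spec m z -> spec n x -> spec (m + n) (cs_mul z x).
Proof.
move=> hz hx l hl; rewrite (alg_homM (sigma_alg hl)) // hz // hx //.
by rewrite cs_mul_cscalel cs_mul_cscaler cscaleA expfzDr ?S1_neq0.
Qed.

Lemma spectral_star n x : spec n x -> spec (- n) (cs_star x).
Proof.
move=> hx l hl; rewrite (star_homS (circle_star_hom hl)) // hx // cs_star_cscale.
by rewrite rmorphXz /= ?S1_conjc ?exprz_inv // unitfE S1_neq0.
Qed.

End CircleAction.

Section SpectralBound.
Variables (R : realType) (A B : CstarAlgebra R) (sigma : R[i] -> A -> A).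
Variables (cA : set A) (beta pi : A -> B).
Hypotheses (hs : strongly_continuous_circle_action sigma)
  (hcA : is_unital_star_subalgebra cA) (hbeta : is_unital_alg_hom_on cA beta)
  (hpi : is_unital_star_hom_on (spectral_subspace sigma 0) pi)
  (pi_beta : forall a, cA a -> spectral_subspace sigma 0 a -> pi a = beta a).
Local Notation spec := (spectral_subspace sigma).

Lemma alg_hom_bounded_spectral0 : bounded_on (cA `&` spec 0) beta.
Proof.
exists 2 => // x [cAx A0x]; rewrite -pi_beta //.
exact: (star_hom_bounded (spectral0_subalg hs) hpi (@spectral0_sqrt1B _ _ _ hs)).
Qed.

Lemma alg_hom_bounded_spectral_pos (k : nat) (z : 'I_k -> A) :
    (forall j, cA (z j) /\ spec 1 (z j)) ->
    \sum_(j < k) cs_mul (z j) (cs_star (z j)) = cs_one A ->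
  forall p : nat, bounded_on (cA `&` spec p) beta.
Proof.
move=> hz sum1; elim=> [|p IH]; first exact: alg_hom_bounded_spectral0.
apply: (alg_hom_bounded_frame hcA hbeta _ sum1 _ IH) => [j|j x hx].
  by have [cz _] := hz j; split => //; apply: subalgS.
by have := spectral_mul hs (spectral_star hs (hz j).2) hx; rewrite intS addKr.
Qed.

Lemma alg_hom_bounded_spectral_neg (k : nat) (z : 'I_k -> A) :
    (forall j, cA (z j) /\ spec 1 (z j)) ->
    \sum_(j < k) cs_mul (cs_star (z j)) (z j) = cs_one A ->
  forall p : nat, bounded_on (cA `&` spec (- p%:Z)) beta.
Proof.
move=> hz sum1; elim=> [|p IH]; first by rewrite oppr0; apply: alg_hom_bounded_spectral0.
apply: (alg_hom_bounded_frame hcA hbeta _ sum1 _ IH) => [j|j x hx].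
  by have [cz _] := hz j; split => //; apply: subalgS.
by have := spectral_mul hs (hz j).2 hx; rewrite intS opprD addNKr.
Qed.

End SpectralBound.

Theorem lemma5p3 (R : realType) (A B : CstarAlgebra R)
  (sigma : R[i] -> A -> A) (cA : set A) (beta : A -> B) (L : A -> R) :
  strongly_continuous_circle_action sigma ->
  is_unital_star_subalgebra cA ->
  closure cA = setT ->
  is_unital_alg_hom_on cA beta ->
  is_slip_norm_on cA L ->
  (* (a) *)
  (forall a, cA a -> cA (P0 sigma a)) ->
  (exists (k : nat) (zR : 'I_k -> A),
      (forall j, cA (zR j) /\ spectral_subspace sigma 1 (zR j)) /\
      \sum_(j < k) cs_mul (zR j) (cs_star (zR j)) = cs_one A) ->
  (exists (m : nat) (zL : 'I_m -> A),
      (forall j, cA (zL j) /\ spectral_subspace sigma 1 (zL j)) /\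
      \sum_(j < m) cs_mul (cs_star (zL j)) (zL j) = cs_one A) ->
  (* (b) *)
  (forall a b, cA a -> cA b ->
      L (cs_mul a b) <= L a * `|beta b| + `|beta_minus beta a| * L b) ->
  (exists pi : A -> B,
      is_unital_star_hom_on (spectral_subspace sigma 0) pi /\
      (forall a, cA a -> spectral_subspace sigma 0 a -> pi a = beta a)) ->
  (* conclusion *)
  forall (n : int) (y : A), cA y -> spectral_subspace sigma n y ->
    exists Cy : R, 0 <= Cy /\
      forall x : A, cA x -> spectral_subspace sigma n x ->
        L (cs_mul (cs_star y) x) <= Cy * (L x + `|x|).
Proof.
move=> hs hcA _ hbeta hL _ [k [zR [hzR sumR]]] [m [zL [hzL sumL]]] leibniz.
move=> [pi [hpi pi_beta]] n y cAy _.
have [C C0 hC] : bounded_on (cA `&` spectral_subspace sigma n) beta.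
  case: n => p; rewrite ?NegzE.
    exact: (alg_hom_bounded_spectral_pos hs hcA hbeta hpi pi_beta hzR sumR).
  exact: (alg_hom_bounded_spectral_neg hs hcA hbeta hpi pi_beta hzL sumL).
case: hL => L_ge0 _ _ _ L_star.
set M := `|beta_minus beta (cs_star y)|; have M0 : 0 <= M := normr_ge0 _.
exists (L y * C + M); split; first by rewrite addr_ge0 ?mulr_ge0 ?L_ge0.
move=> x cAx Anx; rewrite (le_trans (leibniz _ _ (subalgS hcA cAy) cAx)) // L_star //.
have bx := hC x (conj cAx Anx).
have Lybx : L y * `|beta x| <= L y * C * `|x| by rewrite -mulrA ler_wpM2l ?L_ge0.
have LyCLx : 0 <= L y * C * L x by rewrite !mulr_ge0 ?L_ge0.
have Mx : 0 <= M * `|x| by rewrite mulr_ge0.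
rewrite -/M mulrDr !mulrDl; lra.
Qed.
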